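(* Assume the rearrangement setting described in the context, and assume additionally that: - $X$ is convex in $R$; and - there is no walk in $R$ that starts in $M$ and ends in $Y$, and no walk in $R$ that starts in $Y$ and ends in $M$. If $R\in\mathfrak{T}_a$, then $S\in\mathfrak{T}_a$.
   Context: **Digraphs.** - A digraph $G$ is a pair $(V(G),A(G))$, where $V(G)$ is a finite non-empty set and $A(G)\subseteq V(G)\times V(G)$. Arcs are written $vw$. - $G^*$ is $G$ with all loops $vv$ removed. - Two vertices $u,w$ are adjacent if $uw\in A(G)$ or $wu\in A(G)$. $N_G(v)$ is the set of $w\ne v$ adjacent to $v$. - A walk is a sequence $v_0,\dots,v_I$ with $I\ge1$ and $v_{i-1}v_i\in A(G)$ for all $i$. It is closed if $v_0=v_I$. - A set $X$ is convex if every walk starting and ending in $X$ has all its vertices in $X$. - $\mathfrak{T}_a$ is the class of digraphs $G$ such that $G^*$ contains no closed walk; equivalently, every closed walk in $G$ is constant. **Rearrangement setting.** - $R=(Z,A(R))$ is a digraph. - $X,M\subseteq Z$ are disjoint. - $Y\subseteq Z$ satisfies $M\cap Y=\emptyset$ and $M\cap N_R(y)=\emptyset$ for all $y\in Y$. - $\beta:X\to Y$ is a map. - $S$ is the digraph with $V(S)=Z$ and $A(S)=A_r\cup A_d\cup A_u$, where: - $A_r=A(R)\setminus((M\times X)\cup(X\times M))$; - $A_d=\{m\beta(x): mx\in A(R)\cap(M\times X)\}$; - $A_u=\{\beta(x)m: xm\in A(R)\cap(X\times M)\}$. *)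

From mathcomp Require Import all_boot.
Set Implicit Arguments. Unset Strict Implicit. Unset Printing Implicit Defensive.

(* A digraph on a finite vertex set T is given by its arc relation
   e : rel T (e v w  <->  vw is an arc). *)

Definition noloops (T : finType) (e : rel T) : rel T :=
  fun v w => (v != w) && e v w.

(* A walk v_0, ..., v_I with I >= 1: start v0, remaining vertices p. *)
Definition walk (T : finType) (e : rel T) (v0 : T) (p : seq T) : bool :=
  (p != [::]) && path e v0 p.

Definition closed_walk (T : finType) (e : rel T) (v0 : T) (p : seq T) : bool :=
  walk e v0 p && (last v0 p == v0).

Definition convex (T : finType) (e : rel T) (X : {set T}) : Prop :=
  forall v0 p, walk e v0 p -> v0 \in X -> last v0 p \in X ->
    all (fun v => v \in X) (v0 :: p).

Definition in_Ta (T : finType) (e : rel T) : Prop :=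
  forall v0 p, ~~ closed_walk (noloops e) v0 p.

Definition adjacent (T : finType) (e : rel T) (u w : T) : bool :=
  e u w || e w u.

Definition nbhd (T : finType) (e : rel T) (v : T) : {set T} :=
  [set w | (w != v) && adjacent e v w].

Definition rearr (T : finType) (R : rel T) (X M : {set T}) (beta : T -> T) : rel T :=
  fun u v =>
    (R u v && ~~ (((u \in M) && (v \in X)) || ((u \in X) && (v \in M))))
    || ((u \in M) && [exists x, (x \in X) && R u x && (v == beta x)])
    || ((v \in M) && [exists x, (x \in X) && R x v && (u == beta x)]).

From mathcomp Require Import all_boot.

Set Implicit Arguments.
Unset Strict Implicit.
Unset Printing Implicit Defensive.

(* Every arc of S is either an arc of R (the arcs A_r), a
   "down" arc m -> beta x with m in M and R m x (A_d), or an "up" arc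
   beta x -> m with R x m (A_u).  We exhibit two vertex sets that S can
   enter but never leave:
     C = the R-descendants of heads of arcs from X into M, and
     F = C together with the R-descendants of Y.
   Along a closed walk, membership in a set closed under forward arcs
   is constant.  But every up arc enters C from outside and every down
   arc enters F from outside; so a closed walk of S^* uses only arcs of
   R and would be a closed walk of R^*. *)

Definition forward_closed (T : finType) (e : rel T) (K : {set T}) : Prop :=
  forall u v, e u v -> u \in K -> v \in K.

Section ForwardClosed.
Variables (T : finType) (e : rel T) (K : {set T}).
Hypothesis closedK : forward_closed e K.

Lemma path_forward_closed a p :
  path e a p -> a \in K -> all (fun v => v \in K) (a :: p).
Proof.
elim: p a => [|v p IHp] a /=; first by move=> _ ->.
by case/andP=> av vp aK; rewrite aK; exact: IHp (closedK av aK).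
Qed.

Lemma closed_walk_same_side v0 p :
  closed_walk e v0 p -> all (fun v => (v \in K) == (v0 \in K)) (v0 :: p).
Proof.
case/andP=> /andP [_ v0p] /eqP last_v0; rewrite /= eqxx /=.
apply/allP=> w wp; have [v0K | v0K] := boolP (v0 \in K).
  by rewrite (allP (path_forward_closed v0p v0K)) // inE wp orbT.
rewrite eqbF_neg; apply/negP=> wK; apply/negP: v0K.
rewrite -last_v0; move: v0p; case/splitPr: wp => p1 p2.
rewrite cat_path last_cat /= => /and3P [_ _ wp2]; rewrite negbK.
exact: (allP (path_forward_closed wp2 wK)) _ (mem_last w p2).
Qed.

End ForwardClosed.

Lemma forward_closed_noloops (T : finType) (e : rel T) (K : {set T}) :
  forward_closed e K -> forward_closed (noloops e) K.
Proof. by move=> closedK u v /andP [_]; exact: closedK. Qed.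

Section Rearrangement.
Variables (T : finType) (R : rel T) (X M Y : {set T}) (beta : T -> T).
Hypotheses (disj_XM : [disjoint X & M]) (disj_MY : [disjoint M & Y]).
Hypothesis beta_Y : forall x, x \in X -> beta x \in Y.
Hypothesis convex_X : convex R X.
Hypothesis no_walk_MY :
  forall v0 p, walk R v0 p -> v0 \in M -> last v0 p \notin Y.
Hypothesis no_walk_YM :
  forall v0 p, walk R v0 p -> v0 \in Y -> last v0 p \notin M.

Let S := rearr R X M beta.

Lemma rearr_cases u v : S u v ->
  [\/ R u v,
      exists2 x, x \in X & [/\ u \in M, R u x & v = beta x]
    | exists2 x, x \in X & [/\ v \in M, R x v & u = beta x]].
Proof.
case/orP=> [/orP [/andP [uv _] | /andP [uM /existsP [x]]] | /andP [vM /existsP [x]]].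
- by constructor 1.
- by case/andP=> /andP [xX ux] /eqP ->; constructor 2; exists x.
- by case/andP=> /andP [xX xv] /eqP ->; constructor 3; exists x.
Qed.

Lemma no_connect_YM y m : y \in Y -> m \in M -> ~~ connect R y m.
Proof.
move=> yY mM; apply/negP=> /connectP [[|a p] yp m_last]; subst m.
  by move: (disjointFr disj_MY mM); rewrite yY.
have y_walk : walk R y (a :: p) by rewrite /walk yp.
by move: (no_walk_YM y_walk yY); rewrite mM.
Qed.

Lemma no_connect_MY m y : m \in M -> y \in Y -> ~~ connect R m y.
Proof.
move=> mM yY; apply/negP=> /connectP [[|a p] mp y_last]; subst y.
  by move: (disjointFr disj_MY mM); rewrite yY.
have m_walk : walk R m (a :: p) by rewrite /walk mp.
by move: (no_walk_MY m_walk mM); rewrite yY.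
Qed.

Definition below_XM : {set T} :=
  [set v | [exists x in X, exists m in M, R x m && connect R m v]].

Definition below_Y : {set T} := [set v | [exists y in Y, connect R y v]].

(* By convexity of X, an R-walk x -> m ->* m' -> x' cannot leave X
   through M; hence the tail of a down arc is never in C. *)
Lemma down_tail_not_below_XM m x : m \in M -> x \in X -> R m x ->
  m \notin below_XM.
Proof.
move=> mM xX mx; rewrite inE; apply/negP.
case/exists_inP=> x0 x0X /exists_inP [m0 m0M].
case/andP=> x0m0 /connectP [q m0q m_last].
have x0_walk : walk R x0 (m0 :: rcons q x).
  by rewrite /walk /= x0m0 rcons_path m0q -m_last mx.
have := convex_X x0_walk x0X; rewrite /= last_rcons => /(_ xX).
by case/and3P=> _ m0X _; move: (disjointFr disj_XM m0X); rewrite m0M.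
Qed.

(* C contains nothing of Y, since it lies below M. *)
Lemma Y_not_below_XM y : y \in Y -> y \notin below_XM.
Proof.
move=> yY; rewrite inE; apply/negP.
case/exists_inP=> x _ /exists_inP [m mM /andP [_ my]].
by move: (no_connect_MY mM yY); rewrite my.
Qed.

Lemma up_head_below_XM x m : x \in X -> m \in M -> R x m -> m \in below_XM.
Proof.
move=> xX mM xm; rewrite inE; apply/exists_inP; exists x => //.
by apply/exists_inP; exists m; rewrite ?xm ?connect0.
Qed.

(* C is entered by up arcs and never left: down arcs do not start in C. *)
Lemma below_XM_forward_closed : forward_closed S below_XM.
Proof.
move=> u v /rearr_cases [uv | [x xX [uM ux _]] | [x xX [vM xv _]]] uC.
- move: uC; rewrite !inE => /exists_inP [x xX /exists_inP [m mM /andP [xm mu]]].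
  apply/exists_inP; exists x => //; apply/exists_inP; exists m => //.
  by rewrite xm (connect_trans mu (connect1 uv)).
- by move: (down_tail_not_below_XM uM xX ux); rewrite uC.
- exact: up_head_below_XM xX vM xv.
Qed.

Lemma below_Y_forward_closed_R : forward_closed R below_Y.
Proof.
move=> u v uv; rewrite !inE => /exists_inP [y yY yu].
by apply/exists_inP; exists y; rewrite ?(connect_trans yu (connect1 uv)).
Qed.

Lemma Y_below_Y y : y \in Y -> y \in below_Y.
Proof. by move=> yY; rewrite inE; apply/exists_inP; exists y; rewrite ?connect0. Qed.

Definition below_XM_Y : {set T} := below_XM :|: below_Y.

(* F is never left: arcs of R preserve both parts, new arcs end in F. *)
Lemma below_XM_Y_forward_closed : forward_closed S below_XM_Y.
Proof.
rewrite /below_XM_Y => u v uv.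
case/rearr_cases: (uv) => [Ruv | [x xX [_ _ ->]] | [x xX [vM xv _]]].
- case/setUP=> [uC | uD]; rewrite inE.
    by rewrite (below_XM_forward_closed uv uC).
  by rewrite (below_Y_forward_closed_R Ruv uD) orbT.
- by move=> _; rewrite inE Y_below_Y ?orbT ?beta_Y.
- by move=> _; rewrite inE (up_head_below_XM xX vM xv).
Qed.

(* Every arc of S not in R crosses into C (up arcs) or into F (down arcs). *)
Lemma rearr_crossing u v : S u v ->
  (u \in below_XM) = (v \in below_XM) ->
  (u \in below_XM_Y) = (v \in below_XM_Y) -> R u v.
Proof.
rewrite /below_XM_Y.
case/rearr_cases=> [// | [x xX [uM ux ->]] | [x xX [vM xv ->]]] sameC sameF.
- have : u \in below_XM :|: below_Y by rewrite sameF inE Y_below_Y ?orbT ?beta_Y.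
  rewrite in_setU (negbTE (down_tail_not_below_XM uM xX ux)) inE.
  case/exists_inP=> y yY yu.
  by move: (no_connect_YM yY uM); rewrite yu.
- move: sameC; rewrite (up_head_below_XM xX vM xv).
  by move: (Y_not_below_XM (beta_Y xX)) => /negbTE ->.
Qed.

(* Hence closed walks of S^* are closed walks of R^*. *)
Lemma rearr_in_Ta : in_Ta R -> in_Ta S.
Proof.
move=> R_Ta v0 p; apply/negP=> S_cycle.
have sideC := closed_walk_same_side
  (forward_closed_noloops below_XM_forward_closed) S_cycle.
have sideF := closed_walk_same_side
  (forward_closed_noloops below_XM_Y_forward_closed) S_cycle.
case/andP: S_cycle => /andP [p_nil Sp] last_v0.
have sides : all (predI (fun w => (w \in below_XM) == (v0 \in below_XM))
    (fun w => (w \in below_XM_Y) == (v0 \in below_XM_Y)))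
    (v0 :: p) by rewrite all_predI sideC sideF.
have Rp : path (noloops R) v0 p.
  apply: sub_in_path sides Sp => u v.
  move=> /andP [/eqP uC /eqP uF] /andP [/eqP vC /eqP vF] /andP [uv Suv].
  by rewrite /noloops uv (rearr_crossing Suv) ?uC ?vC ?uF ?vF.
by move: (R_Ta v0 p); rewrite /closed_walk /walk p_nil Rp last_v0.
Qed.

End Rearrangement.

Theorem lemma7 (T : finType) (R : rel T) (X M Y : {set T}) (beta : T -> T) :
  [disjoint X & M] ->
  [disjoint M & Y] ->
  (forall y, y \in Y -> [disjoint M & nbhd R y]) ->
  (forall x, x \in X -> beta x \in Y) ->
  convex R X ->
  (forall v0 p, walk R v0 p -> v0 \in M -> last v0 p \notin Y) ->
  (forall v0 p, walk R v0 p -> v0 \in Y -> last v0 p \notin M) ->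
  in_Ta R -> in_Ta (rearr R X M beta).
Proof.
move=> disj_XM disj_MY _ beta_Y convex_X no_walk_MY no_walk_YM.
exact: rearr_in_Ta disj_XM disj_MY beta_Y convex_X no_walk_MY no_walk_YM.
Qed.
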